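(* Let $t=a^id^j$ and let $W$ be a finite-dimensional left $\mathcal{O}_{nc}(B)$-comodule all of whose weights equal $t$. Then the coaction of $W$ is $w\mapsto t\otimes w$ for all $w\in W$; in particular $W$ is a direct sum of copies of $k_t$ and its coaction takes values in the subcoalgebra of $\mathcal{O}_{nc}(B)$ spanned by the monomials $a^pd^q$.
   Context: $\mathcal{O}_{nc}(\mathrm{GL}_2)$ is the Hopf algebra generated by $a,b,c,d,\delta,\delta^{-1}$ with relations $ac=ca$, $bd=db$, $ad-cb=\delta=da-bc$, $\delta\delta^{-1}=1=\delta^{-1}\delta$, $a\delta^{-1}d-b\delta^{-1}c=1=d\delta^{-1}a-c\delta^{-1}b$, $b\delta^{-1}a=a\delta^{-1}b$, $c\delta^{-1}d=d\delta^{-1}c$, with $\Delta(a)=a\otimes a+b\otimes c$, $\Delta(b)=a\otimes b+b\otimes d$, $\Delta(c)=c\otimes a+d\otimes c$, $\Delta(d)=c\otimes b+d\otimes d$, $\Delta(\delta^{\pm1})=\delta^{\pm1}\otimes\delta^{\pm1}$. $\mathcal{O}_{nc}(B)=\mathcal{O}_{nc}(\mathrm{GL}_2)/(b)$ (a quotient Hopf algebra; images of $a,d$ are invertible grouplikes), and $\mathcal{O}(T)=\mathcal{O}_{nc}(\mathrm{GL}_2)/(b,c)\cong k[a^{\pm1},d^{\pm1}]$, a quotient of $\mathcal{O}_{nc}(B)$. The weights of an $\mathcal{O}_{nc}(B)$-comodule $W$ are the monomials $t$ with nonzero weight space $W_t=\{w: w\mapsto t\otimes w\}$ for the induced $\mathcal{O}(T)$-coaction.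 $k_t$ is the one-dimensional comodule $1\mapsto t\otimes1$. *)

From HB Require Import structures.
From mathcomp Require Import all_boot all_order all_algebra.
Set Implicit Arguments. Unset Strict Implicit. Unset Printing Implicit Defensive.
Import Order.TTheory GRing.Theory Num.Theory.
Local Open Scope ring_scope.

(* The Hopf algebra O_nc(B) = O_nc(GL_2)/(b).                                *)
(* Setting b = 0 in the relations of O_nc(GL_2) gives: ad = da = delta,      *)
(* ac = ca, a and d invertible with delta^{-1} = a^{-1} d^{-1}, and the      *)
(* remaining relations become consequences.  Hence                           *)
(*   O_nc(B) = k[a^{+-1}] (x) k<d^{+-1}, c>,  a central,                     *)
(* whose k-basis consists of the normal-form monomials                      *)
(*   a^p d^{n0} c d^{n1} c ... c d^{nk}     (p, n_i integers, k >= 0).       *)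
(* Such a monomial is encoded as  (p, (n0, [:: n1; ...; nk])).               *)
Definition mono : Type := (int * (int * seq int))%type.

Definition torus_mono (i j : int) : mono := (i, (j, [::])).

(* Coproduct of the word d^{n0} c d^{n1} ... c d^{nk} (no a-factor), as a   *)
(* list of pairs (left tensor factor, right tensor factor), each a normal    *)
(* form monomial; computed from Delta(d^{+-1}) = d^{+-1} (x) d^{+-1},        *)
(* Delta(c) = c (x) a + d (x) c, Delta(a) = a (x) a, multiplicativity, and   *)
(* centrality of a:                                                          *)
(*  Delta(d^{n0} c w) = (d^{n0} c (x) d^{n0} a + d^{n0+1} (x) d^{n0} c) Delta(w). *)
Fixpoint deltaw (n0 : int) (ns : seq int) : seq (mono * mono) :=
  match ns with
  | [::] => [:: ((0, (n0, [::])), (0, (n0, [::])))]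
  | n1 :: ns' =>
      flatten [seq [:: ((LR.1.1, (n0, LR.1.2.1 :: LR.1.2.2)),
                        (LR.2.1 + 1, (n0 + LR.2.2.1, LR.2.2.2)));
                       ((LR.1.1, (n0 + 1 + LR.1.2.1, LR.1.2.2)),
                        (LR.2.1, (n0, LR.2.2.1 :: LR.2.2.2)))]
              | LR <- deltaw n1 ns']
  end.

(* Delta(a^p w) = (a^p (x) a^p) Delta(w). *)
Definition delta (m : mono) : seq (mono * mono) :=
  [seq ((m.1 + x.1.1, x.1.2), (m.1 + x.2.1, x.2.2)) | x <- deltaw m.2.1 m.2.2].

Definition Dcoef (m m1 m2 : mono) : nat := count (pred1 (m1, m2)) (delta m).

(* Counit: eps(a) = eps(d) = 1, eps(c) = 0. *)
Definition eps (m : mono) : nat := if m.2.2 is [::] then 1%N else 0%N.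

(* Finite-dimensional left comodules.  W = k^n (row vectors).  Since the     *)
(* monomials form a basis of H = O_nc(B), an element of H (x) W is a         *)
(* finitely supported family (w_m)_m of vectors, standing for sum_m m (x) w_m.*)
(* A linear coaction rho : W -> H (x) W is thus a family of matrices         *)
(* rho m : 'M_n, finitely supported, with  rho(w) = sum_m m (x) (w *m rho m).*)
(* Coassociativity (Delta (x) id) rho = (id (x) rho) rho reads, on the       *)
(* coefficient of m1 (x) m2:  sum_m Dcoef m m1 m2 * rho m = rho m1 *m rho m2.*)
(* Counitality (eps (x) id) rho = id reads  sum_m eps m * rho m = 1.         *)
(* The sums are taken over any duplicate-free list S containing the support. *)
Definition is_comodule (k : fieldType) (n : nat) (rho : mono -> 'M[k]_n) : Prop :=
  exists S : seq mono,
    [/\ uniq S,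
        (forall m, m \notin S -> rho m = 0),
        (forall m1 m2, \sum_(m <- S) (Dcoef m m1 m2)%:R *: rho m = rho m1 *m rho m2)
      & \sum_(m <- S) (eps m)%:R *: rho m = 1%:M].

(* The projection pi : O_nc(B) -> O(T) kills every monomial containing c and *)
(* sends a^p d^q to a^p d^q.  So the coefficient of a^p d^q in               *)
(* (pi (x) id) rho(w) is  w *m rho (torus_mono p q).                         *)
(* Weight space W_t for t = a^i d^j:  {w | (pi (x) id) rho(w) = t (x) w}.    *)
Definition in_weight_space (k : fieldType) (n : nat) (rho : mono -> 'M[k]_n)
    (i j : int) (w : 'rV[k]_n) : Prop :=
  forall p q : int, w *m rho (torus_mono p q) = ((p == i) && (q == j))%:R *: w.

Definition is_weight (k : fieldType) (n : nat) (rho : mono -> 'M[k]_n) (i j : int) : Prop :=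
  exists2 w : 'rV[k]_n, w != 0 & in_weight_space rho i j w.

From HB Require Import structures.
From mathcomp Require Import all_boot all_order all_algebra.
Set Implicit Arguments. Unset Strict Implicit. Unset Printing Implicit Defensive.
Import Order.TTheory GRing.Theory Num.Theory.
Local Open Scope ring_scope.

(* In the coproduct of a normal-form monomial m, every term whose right
   (resp. left) factor is a torus monomial a^p d^q has m as its other factor,
   and p = deg_a m + #c(m) (resp. p = deg_a m).  Hence the rho(a^p d^q) are
   orthogonal idempotents whose images consist of weight vectors of weight
   a^p d^q, so all of them vanish except rho(t), which counitality forces to
   be 1.  For m containing c, rho(m) = rho(m) rho(t) = rho(t) rho(m), and i
   cannot equal both deg_a m + #c(m) and deg_a m, so rho(m) = 0. *)

Lemma deltaw_torusr n0 ns x : x \in deltaw n0 ns -> x.2.2.2 = [::] ->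
  x.1 = (0, (n0, ns)) /\ x.2.1 = (size ns)%:Z.
Proof.
elim: ns n0 x => [|n1 ns IH] n0 x /=; first by rewrite inE => /eqP ->.
case/flatten_mapP => LR /IH {}IH; rewrite !inE => /orP[] /eqP -> //=.
by case/IH => -> ->; rewrite -addn1 PoszD.
Qed.

Lemma deltaw_torusl n0 ns x : x \in deltaw n0 ns -> x.1.2.2 = [::] ->
  x.2 = (0, (n0, ns)) /\ x.1.1 = 0.
Proof.
elim: ns n0 x => [|n1 ns IH] n0 x /=; first by rewrite inE => /eqP ->.
case/flatten_mapP => LR /IH {}IH; rewrite !inE => /orP[] /eqP -> //=.
by case/IH => -> ->.
Qed.

Lemma delta_torusr m m1 p q : (m1, torus_mono p q) \in delta m ->
  m1 = m /\ p = m.1 + (size m.2.2)%:Z.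
Proof.
case: m => p0 [q0 ns] /mapP [x /deltaw_torusr xP [-> -> x22]].
by case: xP => [|-> ->]; rewrite -?x22 ?addr0.
Qed.

Lemma delta_torusl m m2 p q : (torus_mono p q, m2) \in delta m ->
  m2 = m /\ p = m.1.
Proof.
case: m => p0 [q0 ns] /mapP [x /deltaw_torusl xP [-> x12 ->]].
by case: xP => [|-> ->]; rewrite -?x12 ?addr0.
Qed.

Lemma Dcoef_neq0 m m1 m2 : (Dcoef m m1 m2 != 0)%N = ((m1, m2) \in delta m).
Proof. by rewrite /Dcoef -has_pred1 has_count lt0n. Qed.

Lemma Dcoef_torus p q m1 m2 :
  Dcoef (torus_mono p q) m1 m2 = ((m1, m2) == (torus_mono p q, torus_mono p q)).
Proof. by rewrite /Dcoef /delta /= !addr0 addn0 eq_sym. Qed.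

Lemma torus_mono_eq p q p' q' :
  (torus_mono p q == torus_mono p' q') = (p == p') && (q == q').
Proof. by rewrite !xpair_eqE eqxx andbT. Qed.

Lemma big_seq_single (R : nmodType) (I : eqType) (r : seq I) (F : I -> R) x :
  uniq r -> (forall y, y != x -> F y = 0) -> (x \notin r -> F x = 0) ->
  \sum_(y <- r) F y = F x.
Proof.
move=> r_uniq Fy0 Fx0; have [xr | /[dup] /Fx0 -> xNr] := boolP (x \in r).
  by rewrite (bigD1_seq x) //= big1 ?addr0.
by rewrite big1_seq // => y /andP[_ yr]; apply: Fy0; apply: contraNneq xNr => <-.
Qed.

Section Comodule.

Variables (k : fieldType) (n : nat) (rho : mono -> 'M[k]_n) (S : seq mono).
Hypothesis S_uniq : uniq S.
Hypothesis rho_supp : forall m, m \notin S -> rho m = 0.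
Hypothesis rho_coassoc :
  forall m1 m2, \sum_(m <- S) (Dcoef m m1 m2)%:R *: rho m = rho m1 *m rho m2.
Hypothesis rho_counit : \sum_(m <- S) (eps m)%:R *: rho m = 1%:M.

Lemma sum_rho_single (c : mono -> nat) m0 :
  (forall m, m != m0 -> (c m)%:R *: rho m = 0) ->
  \sum_(m <- S) (c m)%:R *: rho m = (c m0)%:R *: rho m0.
Proof.
by move=> c0; apply: big_seq_single => // /rho_supp ->; rewrite scaler0.
Qed.

Lemma rho_torus_mul p q p' q' : rho (torus_mono p q) *m rho (torus_mono p' q') =
  ((p == p') && (q == q'))%:R *: rho (torus_mono p q).
Proof.
rewrite -rho_coassoc (sum_rho_single (m0 := torus_mono p q)).
  by rewrite Dcoef_torus xpair_eqE eqxx /= eq_sym torus_mono_eq.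
move=> m mNt; suff -> : Dcoef m (torus_mono p q) (torus_mono p' q') = 0%N.
  by rewrite scale0r.
apply/eqP; apply: contraNT mNt; rewrite Dcoef_neq0.
by case/delta_torusr => ->.
Qed.

Lemma rho_mul_torusr m p q : p != m.1 + (size m.2.2)%:Z ->
  rho m *m rho (torus_mono p q) = 0.
Proof.
move=> pNdeg; rewrite -rho_coassoc big1_seq // => m' _.
suff -> : Dcoef m' m (torus_mono p q) = 0%N by rewrite scale0r.
apply/eqP; apply: contraNT pNdeg; rewrite Dcoef_neq0.
by case/delta_torusr => -> ->.
Qed.

Lemma rho_mul_torusl m p q : p != m.1 -> rho (torus_mono p q) *m rho m = 0.
Proof.
move=> pNdeg; rewrite -rho_coassoc big1_seq // => m' _.
suff -> : Dcoef m' (torus_mono p q) m = 0%N by rewrite scale0r.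
apply/eqP; apply: contraNT pNdeg; rewrite Dcoef_neq0.
by case/delta_torusl => -> ->.
Qed.

Lemma rho_torus_weight_space p q (w : 'rV[k]_n) :
  in_weight_space rho p q (w *m rho (torus_mono p q)).
Proof.
move=> p' q'; rewrite -mulmxA rho_torus_mul -scalemxAr.
by rewrite [p' == p]eq_sym [q' == q]eq_sym.
Qed.

Variables i j : int.
Hypothesis weights_eq : forall p q, is_weight rho p q -> p = i /\ q = j.

Lemma rho_torus_eq0 p q : torus_mono p q != torus_mono i j ->
  rho (torus_mono p q) = 0.
Proof.
move=> tNt; apply/row_matrixP => r; rewrite row0 -[rho _]mul1mx row_mul.
apply/eqP; apply: contraNT tNt => wNZ.
suff /weights_eq[-> ->] : is_weight rho p q by [].
exists (row r 1%:M *m rho (torus_mono p q)) => //.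
exact: rho_torus_weight_space.
Qed.

Lemma rho_torus_weight : rho (torus_mono i j) = 1%:M.
Proof.
rewrite -rho_counit (sum_rho_single (m0 := torus_mono i j)) ?scale1r //.
case=> p [q [|? ?]] tNt; last by rewrite scale0r.
by rewrite [rho _]rho_torus_eq0 // scaler0.
Qed.

Lemma rho_c_word_eq0 m : m.2.2 != [::] -> rho m = 0.
Proof.
move=> has_c; have [i_deg | iNdeg] := eqVneq i (m.1 + (size m.2.2)%:Z).
  rewrite -[rho m]mul1mx -rho_torus_weight rho_mul_torusl // i_deg.
  by rewrite -subr_eq0 addrAC subrr add0r; case: m.2.2 has_c.
by rewrite -[rho m]mulmx1 -rho_torus_weight rho_mul_torusr.
Qed.

Lemma rho_eq_scalar m : rho m = (m == torus_mono i j)%:R%:M.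
Proof.
case: m => p [q [|x ns]].
  2: by rewrite rho_c_word_eq0 // !xpair_eqE /= !andbF raddf0.
case: eqP => [-> | /eqP tNt]; first exact: rho_torus_weight.
by rewrite [rho _]rho_torus_eq0 // raddf0.
Qed.

End Comodule.

Theorem mainTheorem15 (k : fieldType) (n : nat) (rho : mono -> 'M[k]_n) (i j : int) :
  is_comodule rho ->
  (forall p q : int, is_weight rho p q -> p = i /\ q = j) ->
  forall (w : 'rV[k]_n) (m : mono),
    w *m rho m = (m == torus_mono i j)%:R *: w.
Proof.
move=> [S [S_uniq rho_supp rho_coassoc rho_counit]] weights_eq w m.
by rewrite (rho_eq_scalar S_uniq rho_supp rho_coassoc rho_counit weights_eq)
  mul_mx_scalar.
Qed.
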